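(* Let $n\ge 3$. For every $A\subseteq[n]$, the operator $\Gamma_A$ belongs to the unital associative algebra (over $\mathbb{R}$) generated by the operators $\Gamma_B$ with $B\subseteq[n]$, $|B|=2$; i.e. each $\Gamma_A$ is a polynomial (with real coefficients depending on $\mu_1,\dots,\mu_n$) in the $\Gamma_{\{i,j\}}$, $1\le i<j\le n$.
   Context: Fix $n\ge1$ and real parameters $\mu_1,\dots,\mu_n>0$; write $[n]=\{1,\dots,n\}$. For $i\in[n]$, $r_i$ is the reflection $(r_if)(x)=f(x_1,\dots,-x_i,\dots,x_n)$ and $T_i=\partial_{x_i}+\frac{\mu_i}{x_i}(1-r_i)$. $\mathcal{C}\ell_n$ is generated by $e_1,\dots,e_n$ with $e_ie_j+e_je_i=-2\delta_{ij}$, $V$ is a fixed left $\mathcal{C}\ell_n$-module, and operators act on $\mathcal{P}(\mathbb{R}^n)\otimes V$ with $x_i,T_i,r_i$ acting on the polynomial factor and $e_i$ on $V$. For $A\subseteq[n]$: $\underline{D}_A=\sum_{i\in A}e_iT_i$, $\underline{x}_A=\sum_{i\in A}e_ix_i$, $\underline{S}_A=\frac12([\underline{x}_A,\underline{D}_A]-1)$, $\Gamma_A=\underline{S}_A\prod_{i\in A}r_i$ (empty sums $0$, empty products $1$). *)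

From HB Require Import structures.
From mathcomp Require Import all_boot all_order all_algebra.
Set Implicit Arguments. Unset Strict Implicit. Unset Printing Implicit Defensive.
Import Order.TTheory GRing.Theory Num.Theory.
Local Open Scope ring_scope.

(* Model of P(R^n) (x) V: an element is a coefficient map from multi-indices
   (exponent vectors alpha, standing for the monomial x^alpha) to V.
   Genuine polynomials are those with finite support (is_poly).
   All operators below act coefficientwise; they are the operators of the
   paper transported to the monomial basis. *)
Definition mon (n : nat) := {ffun 'I_n -> nat}.

Definition incm n (i : 'I_n) (a : mon n) : mon n := [ffun j => (a j + (j == i))%N].
Definition decm n (i : 'I_n) (a : mon n) : mon n := [ffun j => (a j - (j == i))%N].

Section Ops.
Variables (R : realFieldType) (n : nat) (V : lmodType R).

Definition PV := mon n -> V.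
Definition Op := PV -> PV.

Definition is_poly (f : PV) : Prop :=
  exists d : nat, forall a : mon n, (d < \sum_(i < n) a i)%N -> f a = 0.

Definition opzero : Op := fun _ _ => 0.
Definition opid : Op := fun f => f.
Definition opadd (P Q : Op) : Op := fun f a => P f a + Q f a.
Definition opscale (c : R) (P : Op) : Op := fun f a => c *: P f a.
Definition opcomp (P Q : Op) : Op := fun f => P (Q f).

(* multiplication by x_i : x^beta |-> x^(beta + e_i) *)
Definition xop (i : 'I_n) : Op :=
  fun f a => if (0 < a i)%N then f (decm i a) else 0.
Definition rop (i : 'I_n) : Op := fun f a => ((-1) ^+ (a i)) *: f a.
(* Dunkl operator T_i = d/dx_i + mu_i/x_i (1 - r_i):
   x^beta |-> (beta_i + mu_i (1 - (-1)^(beta_i))) x^(beta - e_i),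
   (the coefficient vanishes when beta_i = 0). *)
Definition Top (mu : 'I_n -> R) (i : 'I_n) : Op :=
  fun f a => ((a i).+1%:R + mu i * (1 - (-1) ^+ (a i).+1)) *: f (incm i a).
Definition eop (e : 'I_n -> V -> V) (i : 'I_n) : Op := fun f a => e i (f a).

Definition DA e mu (A : {set 'I_n}) : Op :=
  \big[opadd/opzero]_(i in A) opcomp (eop e i) (Top mu i).
Definition XA e (A : {set 'I_n}) : Op :=
  \big[opadd/opzero]_(i in A) opcomp (eop e i) (xop i).
Definition SA e mu (A : {set 'I_n}) : Op :=
  opscale (2^-1)
    (opadd (opadd (opcomp (XA e A) (DA e mu A))
                  (opscale (-1) (opcomp (DA e mu A) (XA e A))))
           (opscale (-1) opid)).
Definition GammaA e mu (A : {set 'I_n}) : Op :=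
  opcomp (SA e mu A) (\big[opcomp/opid]_(i in A) rop i).

Inductive op_alg (G : Op -> Prop) : Op -> Prop :=
| alg_gen P : G P -> op_alg G P
| alg_id : op_alg G opid
| alg_add P Q : op_alg G P -> op_alg G Q -> op_alg G (opadd P Q)
| alg_scale c P : op_alg G P -> op_alg G (opscale c P)
| alg_comp P Q : op_alg G P -> op_alg G Q -> op_alg G (opcomp P Q).

End Ops.

From HB Require Import structures.
From mathcomp Require Import all_boot all_order all_algebra.
From mathcomp Require Import boolp ring.
Set Implicit Arguments. Unset Strict Implicit. Unset Printing Implicit Defensive.
Import Order.TTheory GRing.Theory Num.Theory.
Local Open Scope ring_scope.

(* All operators involved are linear maps of P(R^n) (x) V, so they live in a ring in
   which x_i, T_i, r_i and e_i obey the Dunkl and Clifford commutation relations.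
   Adding an index j outside C changes S by

     S_(C+j) = S_C + 1/2 + mu_j r_j + sum_(c in C) e_c e_j L_cj,   L_cj = x_c T_j - x_j T_c,

   and the Dunkl angular momenta satisfy [L_jk, L_cj] = - L_ck (1 + 2 mu_j r_j).
   Conjugation by a product of reflections only changes the signs of these terms, and
   together this gives, for distinct j, k outside C,

     Gamma_(C+j) Gamma_jk + Gamma_jk Gamma_(C+j)
       = Gamma_(C+k) + 2 mu_j Gamma_(C+j+k) + 2 mu_k Gamma_C.

   As mu_j <> 0, this expresses Gamma_A for |A| >= 3 through Gammas with fewer indices,
   while Gamma_empty = -1/2 and Gamma_i = mu_i are scalars; induct on |A|. *)

Section LinearOperators.
Variables (R : realFieldType) (n : nat) (V : lmodType R).

Definition linear_op (P : Op n V) : Prop :=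
  forall (c : R) (f g : PV n V),
    P (fun a => c *: f a + g a) = (fun a => c *: P f a + P g a).

Record linop := LinOp { opfun :> PV n V -> PV n V; opfunP : linear_op opfun }.

Lemma linopP (P Q : linop) : (forall f a, P f a = Q f a) -> P = Q.
Proof.
case: P Q => [P linP] [Q linQ] /= PQ.
have {PQ}eqPQ : P = Q by apply/funext => f; apply/funext => a; exact: PQ.
by subst Q; congr LinOp; exact: Prop_irrelevance.
Qed.

Lemma linop_zero (P : linop) : P (fun _ => 0) = (fun _ => 0).
Proof.
have := opfunP P (-1) (fun _ => 0) (fun _ => 0); under eq_fun do rewrite scaler0 addr0.
by under [in X in _ = X -> _]eq_fun do rewrite scaleN1r addNr.
Qed.

Lemma linopD (P : linop) (f g : PV n V) :
  P (fun a => f a + g a) = (fun a => P f a + P g a).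
Proof.
have := opfunP P 1 f g; under eq_fun do rewrite scale1r.
by under [in X in _ = X -> _]eq_fun do rewrite scale1r.
Qed.

Lemma linopZ (P : linop) (c : R) (f : PV n V) :
  P (fun a => c *: f a) = (fun a => c *: P f a).
Proof.
have := opfunP P c f (fun _ => 0); rewrite linop_zero.
by under eq_fun do rewrite addr0; under [in X in _ = X -> _]eq_fun do rewrite addr0.
Qed.

Lemma linear_op_zero : linear_op (@opzero R n V).
Proof. by move=> c f g; apply/funext => a; rewrite /opzero scaler0 addr0. Qed.

Lemma linear_op_id : linear_op (@opid R n V).
Proof. by []. Qed.

Lemma linear_op_add (P Q : Op n V) :
  linear_op P -> linear_op Q -> linear_op (opadd P Q).
Proof.
by move=> linP linQ c f g; apply/funext => a; rewrite /opadd linP linQ scalerDr addrACA.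
Qed.

Lemma linear_op_scale (d : R) (P : Op n V) : linear_op P -> linear_op (opscale d P).
Proof.
by move=> linP c f g; apply/funext => a; rewrite /opscale linP scalerDr !scalerA mulrC.
Qed.

Lemma linear_op_comp (P Q : Op n V) :
  linear_op P -> linear_op Q -> linear_op (opcomp P Q).
Proof. by move=> linP linQ c f g; rewrite /opcomp linQ linP. Qed.

Definition linop0 := LinOp linear_op_zero.
Definition linop1 := LinOp linear_op_id.
Definition linop_add (P Q : linop) := LinOp (linear_op_add (opfunP P) (opfunP Q)).
Definition linop_scale (c : R) (P : linop) := LinOp (linear_op_scale c (opfunP P)).
Definition linop_opp (P : linop) := linop_scale (-1) P.
Definition linop_mul (P Q : linop) := LinOp (linear_op_comp (opfunP P) (opfunP Q)).

Lemma linop_addA : associative linop_add.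
Proof. by move=> P Q W; apply: linopP => f a /=; rewrite /opadd addrA. Qed.
Lemma linop_addC : commutative linop_add.
Proof. by move=> P Q; apply: linopP => f a /=; rewrite /opadd addrC. Qed.
Lemma linop_add0 : left_id linop0 linop_add.
Proof. by move=> P; apply: linopP => f a /=; rewrite /opadd /opzero add0r. Qed.
Lemma linop_addN : left_inverse linop0 linop_opp linop_add.
Proof. by move=> P; apply: linopP => f a /=; rewrite /opadd /opscale scaleN1r addNr. Qed.

Lemma linop_mulA : associative linop_mul.
Proof. by move=> P Q W; apply: linopP. Qed.
Lemma linop_mul1 : left_id linop1 linop_mul.
Proof. by move=> P; apply: linopP. Qed.
Lemma linop_mulr1 : right_id linop1 linop_mul.
Proof. by move=> P; apply: linopP. Qed.
Lemma linop_mulDl : left_distributive linop_mul linop_add.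
Proof. by move=> P Q W; apply: linopP. Qed.
Lemma linop_mulDr : right_distributive linop_mul linop_add.
Proof. by move=> P Q W; apply: linopP => f a /=; rewrite /opcomp /opadd linopD. Qed.

Lemma linop_scaleA a b (P : linop) : linop_scale a (linop_scale b P) = linop_scale (a * b) P.
Proof. by apply: linopP => f x /=; rewrite /opscale scalerA. Qed.
Lemma linop_scale1 : left_id 1 linop_scale.
Proof. by move=> P; apply: linopP => f x /=; rewrite /opscale scale1r. Qed.
Lemma linop_scaleDr : right_distributive linop_scale linop_add.
Proof. by move=> c P Q; apply: linopP => f x /=; rewrite /opscale /opadd scalerDr. Qed.
Lemma linop_scaleDl (P : linop) : {morph linop_scale^~ P : a b / a + b >-> linop_add a b}.
Proof. by move=> a b; apply: linopP => f x /=; rewrite /opscale /opadd scalerDl. Qed.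

End LinearOperators.
Arguments linop : clear implicits.

HB.instance Definition _ (R : realFieldType) n (V : lmodType R) :=
  gen_eqMixin (linop R n V).
HB.instance Definition _ (R : realFieldType) n (V : lmodType R) :=
  gen_choiceMixin (linop R n V).
HB.instance Definition _ (R : realFieldType) n (V : lmodType R) :=
  GRing.isZmodule.Build (linop R n V)
    (@linop_addA R n V) (@linop_addC R n V) (@linop_add0 R n V) (@linop_addN R n V).
HB.instance Definition _ (R : realFieldType) n (V : lmodType R) :=
  GRing.Zmodule_isPzRing.Build (linop R n V)
    (@linop_mulA R n V) (@linop_mul1 R n V) (@linop_mulr1 R n V)
    (@linop_mulDl R n V) (@linop_mulDr R n V).
HB.instance Definition _ (R : realFieldType) n (V : lmodType R) :=
  GRing.Zmodule_isLmodule.Build R (linop R n V)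
    (@linop_scaleA R n V) (@linop_scale1 R n V) (@linop_scaleDr R n V)
    (@linop_scaleDl R n V).

Section LinearOperatorAlgebra.
Variables (R : realFieldType) (n : nat) (V : lmodType R).
Implicit Types (P Q : linop R n V) (f : PV n V) (a : mon n).

Lemma linop_addE P Q f a : (P + Q) f a = P f a + Q f a. Proof. by []. Qed.
Lemma linop_oppE P f a : (- P) f a = - P f a.
Proof. by rewrite /= /opscale scaleN1r. Qed.
Lemma linop_scaleE c P f a : (c *: P) f a = c *: P f a. Proof. by []. Qed.
Lemma linop_mulE P Q f a : (P * Q) f a = P (Q f) a. Proof. by []. Qed.
Lemma linop_oneE f a : (1 : linop R n V) f a = f a. Proof. by []. Qed.

Definition linopE := (linop_addE, linop_oppE, linop_scaleE, linop_mulE, linop_oneE).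

Lemma linop_scalerAl c P Q : c *: P * Q = c *: (P * Q).
Proof. by apply: linopP. Qed.

Lemma linop_scalerAr c P Q : P * (c *: Q) = c *: (P * Q).
Proof. by apply: linopP => f a; rewrite !linopE /= linopZ. Qed.

Lemma linop_commrZ c P Q : GRing.comm P Q -> GRing.comm P (c *: Q).
Proof. by move=> PQ; rewrite /GRing.comm linop_scalerAr linop_scalerAl PQ. Qed.

End LinearOperatorAlgebra.

Section ZmodCancel.
Variable M : zmodType.
Implicit Types s r t u : M.

Lemma addr_pull_last s r t u : s = r + t -> s + u = r + u + t.
Proof. by move=> ->; rewrite addrAC. Qed.

Lemma addr_pull_base t : t = 0 + t.
Proof. by rewrite add0r. Qed.

Lemma addrN_cancel_last s r t : s = r + t -> r = 0 -> s - t = 0.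
Proof. by move=> -> ->; rewrite add0r subrr. Qed.

Lemma addr_cancel_last s r t : s = r - t -> r = 0 -> s + t = 0.
Proof. by move=> -> ->; rewrite add0r addNr. Qed.

End ZmodCancel.

(* [zmod_cancel] proves an identity in a Z-module whose two sides, flattened into sums of
   signed atoms, agree up to reordering, so it also works in noncommutative rings, where
   [ring] does not apply. Atoms are compared syntactically, then by unification, since
   rewriting can leave the same product with different canonical-instance paths. *)
Ltac same_atom u t :=
  first [constr_eq_nounivs u t
        | with_strategy opaque [linop_mul linop_add linop_scale linop_opp] unify u t].

Ltac pull_atom t := lazymatch goal with
  | |- ?s + ?u = _ => first [same_atom u t; reflexivity
                            | eapply addr_pull_last; pull_atom t]
  | |- ?u = _ => same_atom u t; eapply addr_pull_base
  end.

Ltac pull_opp_atom t := lazymatch goal with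
  | |- ?s + (@GRing.opp _ ?u) = _ => first [same_atom u t; reflexivity
                                | eapply addr_pull_last; pull_opp_atom t]
  | |- ?s + ?u = _ => eapply addr_pull_last; pull_opp_atom t
  | |- (@GRing.opp _ ?u) = _ => same_atom u t; eapply addr_pull_base
  end.

Ltac cancel_atoms := lazymatch goal with
  | |- 0 = 0 => reflexivity
  | |- ?s + (@GRing.opp _ ?t) = 0 => eapply addrN_cancel_last; [pull_atom t | cancel_atoms]
  | |- ?s + ?t = 0 => eapply addr_cancel_last; [pull_opp_atom t | cancel_atoms]
  end.

Ltac zmod_cancel :=
  apply/eqP; rewrite -subr_eq0; apply/eqP; rewrite ?(opprD, opprK, addrA); cancel_atoms.

Lemma setU1_ind (T : finType) (P : {set T} -> Prop) :
  P set0 -> (forall x (A : {set T}), x \notin A -> P A -> P (x |: A)) -> forall A, P A.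
Proof.
move=> P0 PU A; move cardA: #|A| => m; elim: m A cardA => [|m IHm] A cardA.
  by move/eqP: cardA; rewrite cards_eq0 => /eqP ->.
have [x xA] : exists x, x \in A by apply/set0Pn; rewrite -card_gt0 cardA.
rewrite -(setD1K xA); apply: PU; first by rewrite setD11.
by apply: IHm; move: cardA; rewrite (cardsD1 x) xA => -[].
Qed.

Lemma mulrACA_comm (T : pzRingType) (x p y q : T) :
  GRing.comm p y -> x * p * (y * q) = x * y * (p * q).
Proof. by move=> pyC; rewrite -mulrA [p * _]mulrA pyC !mulrA. Qed.

Lemma commrM_anticomm (T : pzRingType) (x y z : T) :
  x * z = - (z * x) -> y * z = - (z * y) -> GRing.comm (x * y) z.
Proof. by move=> xz yz; rewrite /GRing.comm -mulrA yz mulrN mulrA xz mulNr opprK mulrA. Qed.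

Lemma mulr_conj_anticomm (T : pzRingType) (p x y z w : T) :
  GRing.comm p x -> GRing.comm p y -> GRing.comm p z -> p * w = - (w * p) ->
  p * (x + y + z + w) = (x + y + z - w) * p.
Proof. by move=> px py pz pw; rewrite !mulrDr !mulrDl mulNr px py pz pw. Qed.

Lemma cards_split2 (T : finType) (A : {set T}) m : #|A| = m.+2 ->
  exists j k (C : {set T}), [/\ j != k, j \notin C, k \notin C, #|C| = m & A = k |: (j |: C)].
Proof.
move=> cardA; have [k kA] : exists k, k \in A by apply/set0Pn; rewrite -card_gt0 cardA.
have cardAk : #|A :\ k| = m.+1 by move: cardA; rewrite (cardsD1 k) kA => -[].
have [j jAk] : exists j, j \in A :\ k by apply/set0Pn; rewrite -card_gt0 cardAk.
exists j, k, ((A :\ k) :\ j); split; rewrite ?setD11 ?(setD1K jAk) ?(setD1K kA) //.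
- by move: jAk; rewrite in_setD1 => /andP [].
- by rewrite !in_setD1 eqxx andbF.
- by move: cardAk; rewrite (cardsD1 j) jAk => -[].
Qed.

Lemma commutatorDD (T : pzRingType) (x X d D : T) :
  (x + X) * (d + D) - (d + D) * (x + X) =
  (X * D - D * X) + (x * d - d * x) + ((x * D - D * x) + (X * d - d * X)).
Proof. rewrite !mulrDl !mulrDr; zmod_cancel. Qed.

Section Monomials.
Variable n : nat.
Implicit Types (a : mon n) (i j : 'I_n).

Lemma incmE i a j : incm i a j = (a j + (j == i))%N.
Proof. by rewrite ffunE. Qed.

Lemma decmE i a j : decm i a j = (a j - (j == i))%N.
Proof. by rewrite ffunE. Qed.

Lemma incmK i : cancel (incm i) (decm i).
Proof. by move=> a; apply/ffunP => j; rewrite !ffunE addnK. Qed.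

Lemma decmK i a : (0 < a i)%N -> incm i (decm i a) = a.
Proof.
move=> ai_gt0; apply/ffunP => j; rewrite !ffunE.
by case: eqP => [->|_]; rewrite ?subnK ?subn0 ?addn0.
Qed.

Lemma incmC i j a : incm i (incm j a) = incm j (incm i a).
Proof. by apply/ffunP => p; rewrite !ffunE -!addnA (addnC (p == j)). Qed.

Lemma decmC i j a : decm i (decm j a) = decm j (decm i a).
Proof. by apply/ffunP => p; rewrite !ffunE -!subnDA addnC. Qed.

Lemma decm_incm i j a : i != j -> decm i (incm j a) = incm j (decm i a).
Proof.
move=> ij; apply/ffunP => p; rewrite !ffunE.
by case: (eqVneq p i) => [->|_]; rewrite ?(negbTE ij) ?addn0 ?subn0.
Qed.

End Monomials.

Section DunklDirac.
Variables (R : realFieldType) (n : nat) (V : lmodType R).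
Variables (e : 'I_n -> V -> V) (mu : 'I_n -> R).
Hypothesis e_linear : forall i (c : R) (u v : V), e i (c *: u + v) = c *: e i u + e i v.
Hypothesis e_clifford :
  forall i j (v : V), e i (e j v) + e j (e i v) = - (2 * (i == j)%:R) *: v.
Implicit Types (A B C P : {set 'I_n}) (c i j k l p q : 'I_n) (a : mon n).
Local Notation L := (linop R n V).
Local Notation half := (2^-1 *: (1 : L)).

(* [refl A], the product of the r_i for i in A, multiplies x^a by [sign_on A a];
   conjugating x_i or T_i by it gives the factor [refl_sign A i]. *)
Definition sign_on A a : R := \prod_(p in A) (-1) ^+ a p.
Definition refl_sign A i : R := if i \in A then -1 else 1.

Lemma refl_signK A i : refl_sign A i * refl_sign A i = 1.
Proof. by rewrite /refl_sign; case: (i \in A); rewrite ?mulrNN mulr1. Qed.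

Lemma refl_sign_in A i : i \in A -> refl_sign A i = -1.
Proof. by rewrite /refl_sign => ->. Qed.

Lemma refl_sign_notin A i : i \notin A -> refl_sign A i = 1.
Proof. by rewrite /refl_sign => /negbTE ->. Qed.

Lemma sign_on_incm A i a : sign_on A (incm i a) = refl_sign A i * sign_on A a.
Proof.
rewrite /sign_on /refl_sign; case: ifP => iA.
  rewrite (bigD1 i iA) [in RHS](bigD1 i iA) /= incmE eqxx addn1 exprS mulrA.
  by congr (_ * _); apply: eq_bigr => p /andP [_ /negbTE pi]; rewrite incmE pi addn0.
rewrite mul1r; apply: eq_bigr => p pA; rewrite incmE.
by case: eqP => [pi|]; [rewrite pi iA in pA | rewrite addn0].
Qed.

Lemma sign_on_decm A i a : (0 < a i)%N -> sign_on A (decm i a) = refl_sign A i * sign_on A a.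
Proof. by move=> ai_gt0; rewrite -{2}(decmK ai_gt0) sign_on_incm mulrA refl_signK mul1r. Qed.

Lemma sign_onK A a : sign_on A a * sign_on A a = 1.
Proof. by rewrite /sign_on -big_split /=; apply: big1 => p _; rewrite -expr2 sqrr_sign. Qed.

Lemma sign_onU1 j C a : j \notin C -> sign_on (j |: C) a = (-1) ^+ a j * sign_on C a.
Proof. by move=> jC; rewrite /sign_on big_setU1. Qed.

Lemma linear_op_xop i : linear_op (@xop R n V i).
Proof. by move=> c f g; apply/funext => a; rewrite /xop; case: ifP; rewrite ?scaler0 ?addr0. Qed.

Lemma linear_op_Top i : linear_op (@Top R n V mu i).
Proof. by move=> c f g; apply/funext => a; rewrite /Top scalerDr !scalerA mulrC. Qed.

Lemma linear_op_eop i : linear_op (@eop R n V e i).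
Proof. by move=> c f g; apply/funext => a; rewrite /eop e_linear. Qed.

Lemma linear_op_sign A : linear_op (fun (f : PV n V) a => sign_on A a *: f a).
Proof. by move=> c f g; apply/funext => a; rewrite scalerDr !scalerA mulrC. Qed.

Definition mulx i : L := LinOp (linear_op_xop i).
Definition dunkl i : L := LinOp (linear_op_Top i).
Definition cliff i : L := LinOp (linear_op_eop i).
Definition refl A : L := LinOp (linear_op_sign A).

Lemma mulxE i f a : mulx i f a = if (0 < a i)%N then f (decm i a) else 0.
Proof. by []. Qed.
Lemma dunklE i f a :
  dunkl i f a = ((a i).+1%:R + mu i * (1 - (-1) ^+ (a i).+1)) *: f (incm i a).
Proof. by []. Qed.
Lemma cliffE i f a : cliff i f a = e i (f a).
Proof. by []. Qed.
Lemma reflE A f a : refl A f a = sign_on A a *: f a.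
Proof. by []. Qed.

Definition opE := (mulxE, dunklE, cliffE, reflE, linopE).

Lemma e_zero i : e i 0 = 0.
Proof.
have := e_linear i 1 0 0; rewrite !scale1r !addr0 => e0D.
by apply: (addrI (e i 0)); rewrite addr0 -e0D.
Qed.

Lemma eZ i (d : R) u : e i (d *: u) = d *: e i u.
Proof. by have := e_linear i d u 0; rewrite !addr0 e_zero addr0. Qed.

Lemma cliff_anticomm i j : cliff i * cliff j + cliff j * cliff i = - (2 * (i == j)%:R) *: (1 : L).
Proof. by apply: linopP => f a; rewrite !opE e_clifford. Qed.

Lemma cliffK i : cliff i * cliff i = -1.
Proof.
have := cliff_anticomm i i; rewrite eqxx mulr1 scaleNr -scalerN -mulr2n -scaler_nat.
by apply: scalerI; rewrite pnatr_eq0.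
Qed.

Lemma cliff_anticomm_neq i j : i != j -> cliff j * cliff i = - (cliff i * cliff j).
Proof.
move=> ij; have := cliff_anticomm i j; rewrite (negbTE ij) mulr0 oppr0 scale0r.
by rewrite addrC => /eqP; rewrite addr_eq0 => /eqP.
Qed.

Lemma comm_cliff_mulx i j : GRing.comm (cliff i) (mulx j).
Proof. by apply: linopP => f a; rewrite !opE; case: ifP; rewrite ?e_zero. Qed.

Lemma comm_cliff_dunkl i j : GRing.comm (cliff i) (dunkl j).
Proof. by apply: linopP => f a; rewrite !opE eZ. Qed.

Lemma comm_cliff_refl i A : GRing.comm (cliff i) (refl A).
Proof. by apply: linopP => f a; rewrite !opE eZ. Qed.

Lemma comm_mulx i j : GRing.comm (mulx i) (mulx j).
Proof.
have [->|ij] := eqVneq i j; first exact: commr_refl.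
apply: linopP => f a; rewrite !opE !decmE (negbTE ij) eq_sym (negbTE ij) !subn0.
by case: (0 < a i)%N; case: (0 < a j)%N => //; rewrite decmC.
Qed.

Lemma comm_dunkl i j : GRing.comm (dunkl i) (dunkl j).
Proof.
have [->|ij] := eqVneq i j; first exact: commr_refl.
apply: linopP => f a; rewrite !opE !incmE (negbTE ij) eq_sym (negbTE ij) !addn0.
by rewrite !scalerA mulrC incmC.
Qed.

Lemma comm_mulx_dunkl i j : i != j -> GRing.comm (mulx i) (dunkl j).
Proof.
move=> ij; apply: linopP => f a; rewrite !opE incmE (negbTE ij) addn0.
case: ifP => _; last by rewrite scaler0.
by rewrite decmE eq_sym (negbTE ij) subn0 decm_incm.
Qed.

Lemma dunkl_mulx_commutator i :
  dunkl i * mulx i - mulx i * dunkl i = 1 + (2 * mu i) *: refl [set i].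
Proof.
apply: linopP => f a; rewrite !opE /sign_on big_set1 incmE eqxx addn1 /= incmK.
have addr_scale (d : R) (v : V) : v + d *: v = (1 + d) *: v by rewrite scalerDl scale1r.
rewrite scalerA addr_scale; case a_i: (a i) => [|m] /=.
  by rewrite subr0; congr (_ *: _); rewrite expr0 expr1; ring.
rewrite decmE a_i eqxx subn1 /= decmK ?a_i // -scalerBl.
by congr (_ *: _); rewrite !exprS; ring.
Qed.

Lemma refl_mulx A i : refl A * mulx i = refl_sign A i *: (mulx i * refl A).
Proof.
apply: linopP => f a; rewrite !opE; case: ifP => [ai_gt0|_]; last by rewrite !scaler0.
by rewrite sign_on_decm // scalerA mulrA refl_signK mul1r.
Qed.

Lemma refl_dunkl A i : refl A * dunkl i = refl_sign A i *: (dunkl i * refl A).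
Proof.
apply: linopP => f a; rewrite !opE sign_on_incm !scalerA; congr (_ *: _).
by rewrite [RHS]mulrCA (mulrA (refl_sign A i)) refl_signK mul1r mulrC.
Qed.

Lemma comm_refl A B : GRing.comm (refl A) (refl B).
Proof. by apply: linopP => f a; rewrite !opE !scalerA mulrC. Qed.

Lemma reflK A : refl A * refl A = 1.
Proof. by apply: linopP => f a; rewrite !opE scalerA sign_onK scale1r. Qed.

Lemma refl0 : refl set0 = 1.
Proof. by apply: linopP => f a; rewrite !opE /sign_on big_set0 scale1r. Qed.

Lemma reflU1 j C : j \notin C -> refl (j |: C) = refl C * refl [set j].
Proof.
move=> jC; apply: linopP => f a.
by rewrite !opE sign_onU1 // scalerA /sign_on big_set1 mulrC.
Qed.

Definition xvec A : L := \sum_(i in A) cliff i * mulx i.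
Definition dirac A : L := \sum_(i in A) cliff i * dunkl i.
Definition Sop A : L := 2^-1 *: (xvec A * dirac A - dirac A * xvec A - 1).
Definition Gamma A : L := Sop A * refl A.

Lemma opfun_sum (I : finType) (Q : pred I) (F : I -> L) :
  opfun (\sum_(i | Q i) F i) = \big[@opadd R n V/@opzero R n V]_(i | Q i) opfun (F i).
Proof.
have opfunD (x y : L) : opfun (x + y) = opadd x y by [].
by rewrite (big_morph _ opfunD (erefl : opfun (0 : L) = @opzero R n V)).
Qed.

Lemma prod_rop A : \big[@opcomp R n V/@opid R n V]_(i in A) rop i = opfun (refl A).
Proof.
apply/funext => f; apply/funext => a; rewrite /= /sign_on /index_enum.
elim: (Finite.enum _) => [|i s IHs] /= in f *; first by rewrite !big_nil scale1r.
by rewrite !big_cons; case: (i \in A); rewrite //= /opcomp /rop IHs scalerA.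
Qed.

Lemma GammaAE A : GammaA e mu A = Gamma A.
Proof.
rewrite /GammaA /SA prod_rop.
have -> : XA e A = xvec A by rewrite /xvec opfun_sum.
by have -> : DA e mu A = dirac A by rewrite /dirac opfun_sum.
Qed.

Lemma xvecU1 j C : j \notin C -> xvec (j |: C) = cliff j * mulx j + xvec C.
Proof. by move=> jC; rewrite /xvec big_setU1. Qed.

Lemma diracU1 j C : j \notin C -> dirac (j |: C) = cliff j * dunkl j + dirac C.
Proof. by move=> jC; rewrite /dirac big_setU1. Qed.

Lemma Sop0 : Sop set0 = - half.
Proof. by rewrite /Sop /xvec /dirac !big_set0 mul0r subrr sub0r scalerN. Qed.

Definition angular i l : L := mulx i * dunkl l - mulx l * dunkl i.
Definition cangular i l : L := cliff i * cliff l * angular i l.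
Definition cangular_sum j C : L := \sum_(c in C) cangular c j.

Lemma cliff_mulrACA i l (P Q : L) :
  GRing.comm P (cliff l) -> cliff i * P * (cliff l * Q) = cliff i * cliff l * (P * Q).
Proof. exact: mulrACA_comm. Qed.

Lemma cliff_commutator_eq j :
  cliff j * mulx j * (cliff j * dunkl j) - cliff j * dunkl j * (cliff j * mulx j)
  = 1 + (2 * mu j) *: refl [set j].
Proof.
rewrite !cliff_mulrACA; try exact/commr_sym/comm_cliff_mulx; try exact/commr_sym/comm_cliff_dunkl.
by rewrite cliffK !mulN1r opprK addrC dunkl_mulx_commutator.
Qed.

Lemma cliff_commutator_neq i l : i != l ->
  cliff i * mulx i * (cliff l * dunkl l) - cliff l * dunkl l * (cliff i * mulx i)
  = 2 *: (cliff i * cliff l * (mulx i * dunkl l)).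
Proof.
move=> il; rewrite !cliff_mulrACA; try exact/commr_sym/comm_cliff_mulx;
  try exact/commr_sym/comm_cliff_dunkl.
by rewrite (cliff_anticomm_neq il) -(comm_mulx_dunkl il) mulNr opprK scaler_nat mulr2n.
Qed.

Lemma cangular_sum_commutators j C : j \notin C ->
  (cliff j * mulx j * dirac C - dirac C * (cliff j * mulx j))
  + (xvec C * (cliff j * dunkl j) - cliff j * dunkl j * xvec C) = 2 *: cangular_sum j C.
Proof.
move=> jC; have -> : cliff j * mulx j * dirac C - dirac C * (cliff j * mulx j)
    = \sum_(c in C) 2 *: (cliff j * cliff c * (mulx j * dunkl c)).
  rewrite /dirac mulr_sumr mulr_suml -sumrB; apply: eq_bigr => c cC.
  by apply: cliff_commutator_neq; apply: contraNneq jC => ->.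
have -> : xvec C * (cliff j * dunkl j) - cliff j * dunkl j * xvec C
    = \sum_(c in C) 2 *: (cliff c * cliff j * (mulx c * dunkl j)).
  rewrite /xvec mulr_sumr mulr_suml -sumrB; apply: eq_bigr => c cC.
  by apply: cliff_commutator_neq; apply: contraNneq jC => <-.
rewrite -big_split scaler_sumr; apply: eq_bigr => c cC /=; rewrite -scalerDr.
have jc : j != c by apply: contraNneq jC => ->.
by rewrite /cangular /angular (cliff_anticomm_neq jc) mulrBr !mulNr; congr (_ *: _); zmod_cancel.
Qed.

Lemma SopU1 j C : j \notin C ->
  Sop (j |: C) = Sop C + half + mu j *: refl [set j] + cangular_sum j C.
Proof.
move=> jC; rewrite /Sop xvecU1 // diracU1 // commutatorDD cliff_commutator_eq.
rewrite -addrA cangular_sum_commutators //.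
have halfK (x : L) : 2^-1 *: (2 *: x) = x by rewrite scalerA mulVf ?pnatr_eq0 // scale1r.
rewrite -scalerA -[in RHS](halfK (mu j *: _)) -[in RHS](halfK (cangular_sum j C)) -!scalerDr.
by congr (_ *: _); zmod_cancel.
Qed.

Lemma comm_mulxdunkl i l p q :
  i != q -> l != p -> GRing.comm (mulx i * dunkl l) (mulx p * dunkl q).
Proof.
move=> iq lp; apply: commrM; apply/commr_sym/commrM.
- exact: comm_mulx.
- by apply: comm_mulx_dunkl; rewrite eq_sym.
- exact/commr_sym/comm_mulx_dunkl.
- exact: comm_dunkl.
Qed.

Lemma angular_commutator c j k : c != j -> j != k -> c != k ->
  angular j k * angular c j - angular c j * angular j k
  = - (angular c k * (1 + (2 * mu j) *: refl [set j])).
Proof.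
move=> cj jk ck; have jc : j != c by rewrite eq_sym.
have kj : k != j by rewrite eq_sym.
have kc : k != c by rewrite eq_sym.
have shiftl p q : p != q -> j != q ->
    mulx j * dunkl q * (mulx p * dunkl j) = mulx p * dunkl q * (mulx j * dunkl j).
  move=> pq jq; rewrite mulrA -[mulx j * dunkl q * mulx p]mulrA -(comm_mulx_dunkl pq).
  have xjC : GRing.comm (mulx j) (mulx p * dunkl q).
    by apply: commrM; [exact: comm_mulx | exact: comm_mulx_dunkl].
  by rewrite xjC -mulrA.
have shiftr p q : j != q ->
    mulx p * dunkl j * (mulx j * dunkl q) = mulx p * dunkl q * (dunkl j * mulx j).
  move=> jq; have TqC : GRing.comm (dunkl q) (dunkl j * mulx j).
    by apply: commrM; [exact: comm_dunkl | exact/commr_sym/comm_mulx_dunkl].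
  by rewrite -mulrA [dunkl j * (_ * _)]mulrA -TqC !mulrA.
rewrite -dunkl_mulx_commutator /angular !mulrBl !mulrBr.
rewrite (comm_mulxdunkl jc kj) (comm_mulxdunkl kj jc) (shiftl _ _ ck jk) (shiftr c _ jk).
rewrite (shiftr k _ jc) (shiftl _ _ kc jc); zmod_cancel.
Qed.

Lemma comm_angular_cliff i l p : GRing.comm (angular i l) (cliff p).
Proof.
have xT_cliffC (q r : 'I_n) : GRing.comm (mulx q * dunkl r) (cliff p).
  by apply/commr_sym/commrM; [exact: comm_cliff_mulx | exact: comm_cliff_dunkl].
by apply/commr_sym/commrB; apply/commr_sym.
Qed.

Lemma cangularM i l p q :
  cangular i l * cangular p q
  = cliff i * cliff l * (cliff p * cliff q) * (angular i l * angular p q).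
Proof. by apply: mulrACA_comm; apply: commrM; apply: comm_angular_cliff. Qed.

Lemma cangular_anticomm c j k : c != j -> j != k -> c != k ->
  cangular c j * cangular j k + cangular j k * cangular c j
  = - (cangular c k * (1 + (2 * mu j) *: refl [set j])).
Proof.
move=> cj jk ck; have jc : j != c by rewrite eq_sym.
rewrite !cangularM.
have -> : cliff c * cliff j * (cliff j * cliff k) = - (cliff c * cliff k).
  by rewrite -mulrA [cliff j * (cliff j * _)]mulrA cliffK mulN1r mulrN.
have -> : cliff j * cliff k * (cliff c * cliff j) = cliff c * cliff k.
  rewrite (cliff_anticomm_neq jc) mulrN -mulrA [cliff k * (cliff j * _)]mulrA.
  rewrite (cliff_anticomm_neq jk) mulNr mulrN opprK !mulrA cliffK mulN1r mulNr.
  by rewrite (cliff_anticomm_neq ck) opprK.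
by rewrite mulNr addrC -mulrBr angular_commutator // mulrN mulrA.
Qed.

Lemma cangular_sum_anticomm j k C : j != k -> j \notin C -> k \notin C ->
  cangular_sum j C * cangular j k + cangular j k * cangular_sum j C
  = - (cangular_sum k C * (1 + (2 * mu j) *: refl [set j])).
Proof.
move=> jk jC kC; rewrite /cangular_sum mulr_suml mulr_sumr -big_split mulr_suml -sumrN.
apply: eq_bigr => c cC; apply: cangular_anticomm => //.
  by apply: contraNneq jC => <-.
by apply: contraNneq kC => <-.
Qed.

Lemma Sop1 j : Sop [set j] = mu j *: refl [set j].
Proof.
rewrite -{1}[[set j]]setU0 SopU1 ?in_set0 // Sop0 /cangular_sum big_set0 addr0.
by rewrite addNr add0r.
Qed.

Lemma cangularC i l : cangular i l = cangular l i.
Proof.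
have [->|il] := eqVneq i l; first by [].
by rewrite /cangular (cliff_anticomm_neq il) /angular mulNr -mulrN opprB.
Qed.

Lemma refl_angular P i l :
  refl P * angular i l = (refl_sign P i * refl_sign P l) *: (angular i l * refl P).
Proof.
have reflxT p q : refl P * (mulx p * dunkl q) =
    (refl_sign P p * refl_sign P q) *: (mulx p * dunkl q * refl P).
  by rewrite mulrA refl_mulx linop_scalerAl -mulrA refl_dunkl linop_scalerAr scalerA mulrA.
by rewrite /angular mulrBr !reflxT [refl_sign P l * _]mulrC -scalerBr mulrBl.
Qed.

Lemma refl_cangular P i l :
  refl P * cangular i l = (refl_sign P i * refl_sign P l) *: (cangular i l * refl P).
Proof.
have reflEE : refl P * (cliff i * cliff l) = cliff i * cliff l * refl P.
  by rewrite mulrA -comm_cliff_refl -mulrA -comm_cliff_refl mulrA.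
by rewrite /cangular mulrA reflEE -mulrA refl_angular linop_scalerAr mulrA.
Qed.

Lemma comm_refl_cangular P i l :
  refl_sign P i * refl_sign P l = 1 -> GRing.comm (refl P) (cangular i l).
Proof. by move=> sgn1; rewrite /GRing.comm refl_cangular sgn1 scale1r. Qed.

Lemma anticomm_refl_cangular P i l :
  refl_sign P i * refl_sign P l = -1 -> refl P * cangular i l = - (cangular i l * refl P).
Proof. by move=> sgnN1; rewrite refl_cangular sgnN1 scaleN1r. Qed.

Lemma comm_cliff2 i l p q : i != p -> i != q -> l != p -> l != q ->
  GRing.comm (cliff i * cliff l) (cliff p * cliff q).
Proof.
by move=> ip iq lp lq; apply: commrM; apply: commrM_anticomm; apply: cliff_anticomm_neq;
  rewrite eq_sym.
Qed.

Lemma comm_angular i l p q : i != p -> i != q -> l != p -> l != q ->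
  GRing.comm (angular i l) (angular p q).
Proof.
move=> ip iq lp lq; have pi : p != i by rewrite eq_sym.
have qi : q != i by rewrite eq_sym.
have pl : p != l by rewrite eq_sym.
have ql : q != l by rewrite eq_sym.
by apply: commrB; apply/commr_sym/commrB; apply/commr_sym/comm_mulxdunkl.
Qed.

Lemma comm_cangular i l p q : i != p -> i != q -> l != p -> l != q ->
  GRing.comm (cangular i l) (cangular p q).
Proof.
move=> ip iq lp lq; have pi : p != i by rewrite eq_sym.
have qi : q != i by rewrite eq_sym.
have pl : p != l by rewrite eq_sym.
have ql : q != l by rewrite eq_sym.
apply: commrM; apply/commr_sym/commrM.
- exact: comm_cliff2.
- by apply/commr_sym/commrM; apply: comm_angular_cliff.
- by apply/commrM; apply: comm_angular_cliff.
- exact: comm_angular.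
Qed.

Lemma comm_Sop (Y : L) C :
  (forall c, c \in C -> GRing.comm Y (refl [set c])) ->
  (forall c d, c \in C -> d \in C -> c != d -> GRing.comm Y (cangular c d)) ->
  GRing.comm Y (Sop C).
Proof.
elim/setU1_ind: C => [|j C jC IHC] Yr YL.
  by rewrite Sop0; exact/commrN/linop_commrZ/commr1.
have CjC c : c \in C -> c \in j |: C by exact: setU1r.
rewrite SopU1 //; apply: commrD; first apply: commrD; first apply: commrD.
- by apply: IHC => [c /CjC|c d /CjC cC /CjC dC]; [exact: Yr | exact: YL].
- exact/linop_commrZ/commr1.
- exact/linop_commrZ/Yr/setU11.
- apply: commr_sum => c cC; apply: YL; rewrite ?setU11 ?CjC //.
  by apply: contraNneq jC => <-.
Qed.

Lemma refl_cangular_sum P j C (s : R) :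
  (forall c, c \in C -> refl_sign P c * refl_sign P j = s) ->
  refl P * cangular_sum j C = s *: (cangular_sum j C * refl P).
Proof.
move=> sgn_s; rewrite /cangular_sum mulr_sumr mulr_suml scaler_sumr.
by apply: eq_bigr => c cC; rewrite refl_cangular sgn_s.
Qed.

Lemma anticommrZ (d : R) (x y : L) : x * y = - (y * x) -> d *: x * y = - (y * (d *: x)).
Proof. by move=> xy; rewrite linop_scalerAl linop_scalerAr xy scalerN. Qed.

Lemma Sop_anticomm_expansion (s a b La Lc K : L) :
  GRing.comm a s -> GRing.comm b s -> GRing.comm Lc s -> GRing.comm b a ->
  a * Lc = - (Lc * a) -> a * La = - (La * a) -> GRing.comm b La ->
  Lc * La = - (K + 2 *: (K * a)) - La * Lc ->
  (s + half + a + La) * (b + half + a - Lc) + (b + half + a + Lc) * (s + half + a - La)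
  = s + half + b + K + 2 *: ((s + half + a + La + half + b + (Lc + K)) * a) + 2 *: (s * b).
Proof.
move=> a_s b_s Lc_s b_a a_Lc a_La b_La Lc_La.
have halfM (x : L) : half * x = 2^-1 *: x by rewrite linop_scalerAl mul1r.
have Mhalf (x : L) : x * half = 2^-1 *: x by rewrite linop_scalerAr mulr1.
(* Hide [half], lest [2 *: half] be simplified to [1] while [half + half] is not. *)
move: halfM Mhalf; move: (2^-1 *: (1 : L)) => h halfM Mhalf.
have halfK (x : L) : 2 *: (2^-1 *: x) = x by rewrite scalerA mulfV ?pnatr_eq0 // scale1r.
have scale2 (x : L) : 2 *: x = x + x by rewrite scaler_nat mulr2n.
apply: (@scalerI _ _ 2); first by rewrite pnatr_eq0.
rewrite !(mulrDl, mulrDr) ?(mulNr, mulrN) ?(halfM, Mhalf).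
rewrite a_s b_s Lc_s b_a a_Lc a_La b_La Lc_La.
rewrite !(scalerDr, scalerN, opprD, opprK) !halfK !scale2.
zmod_cancel.
Qed.

Lemma GammaM A B (x : L) :
  refl A * Sop B = x * refl A -> Gamma A * Gamma B = Sop A * x * (refl A * refl B).
Proof. by move=> conj; rewrite /Gamma -mulrA [refl A * _]mulrA conj !mulrA. Qed.

Lemma Sop2 j k : j != k ->
  Sop [set j; k] = mu k *: refl [set k] + half + mu j *: refl [set j] + cangular j k.
Proof. by move=> jk; rewrite SopU1 ?in_set1 // Sop1 /cangular_sum big_set1 cangularC. Qed.

Lemma refl_conj_Sop2 j k C : j != k -> k \notin C ->
  refl (j |: C) * Sop [set j; k] =
  (mu k *: refl [set k] + half + mu j *: refl [set j] - cangular j k) * refl (j |: C).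
Proof.
move=> jk kC; rewrite Sop2 //; apply: mulr_conj_anticomm; try exact/linop_commrZ/comm_refl.
  exact/linop_commrZ/commr1.
apply: anticomm_refl_cangular; rewrite refl_sign_in ?setU11 // refl_sign_notin ?mulr1 //.
by rewrite in_setU1 negb_or eq_sym jk.
Qed.

Lemma refl2_conj_Sop j k C : j \notin C -> k \notin C ->
  refl [set j; k] * Sop (j |: C) =
  (Sop C + half + mu j *: refl [set j] - cangular_sum j C) * refl [set j; k].
Proof.
move=> jC kC; have jkC c : c \in C -> c \notin [set j; k].
  move=> cC; rewrite !inE negb_or; apply/andP.
  by split; [apply: contraNneq jC => <- | apply: contraNneq kC => <-].
rewrite SopU1 //; apply: mulr_conj_anticomm.
- apply: comm_Sop => [c _|c d cC dC _]; first exact: comm_refl.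
  by apply: comm_refl_cangular; rewrite !refl_sign_notin ?mulr1 ?jkC.
- exact/linop_commrZ/commr1.
- exact/linop_commrZ/comm_refl.
rewrite (@refl_cangular_sum _ _ _ (-1)) ?scaleN1r // => c cC.
by rewrite (refl_sign_in (setU11 _ _)) refl_sign_notin ?mul1r ?jkC.
Qed.

Lemma Sop_anticomm j k C : j != k -> j \notin C -> k \notin C ->
  Sop (j |: C) * (mu k *: refl [set k] + half + mu j *: refl [set j] - cangular j k)
  + Sop [set j; k] * (Sop C + half + mu j *: refl [set j] - cangular_sum j C)
  = Sop (k |: C) + 2 *: (Sop (k |: (j |: C)) * (mu j *: refl [set j]))
    + 2 *: (Sop C * (mu k *: refl [set k])).
Proof.
move=> jk jC kC; have k_jC : k \notin j |: C by rewrite in_setU1 negb_or eq_sym jk.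
have Cj c : c \in C -> c != j by move=> cC; apply: contraNneq jC => <-.
have Ck c : c \in C -> c != k by move=> cC; apply: contraNneq kC => <-.
rewrite (SopU1 k_jC) {2}/cangular_sum big_setU1 //= (SopU1 jC) Sop2 // (SopU1 kC).
apply: Sop_anticomm_expansion.
- apply/commr_sym/linop_commrZ/commr_sym/comm_Sop => [c _|c d cC dC _].
    exact: comm_refl.
  by apply: comm_refl_cangular; rewrite !refl_sign_notin ?mulr1 // in_set1 ?Cj.
- apply/commr_sym/linop_commrZ/commr_sym/comm_Sop => [c _|c d cC dC _].
    exact: comm_refl.
  by apply: comm_refl_cangular; rewrite !refl_sign_notin ?mulr1 // in_set1 ?Ck.
- apply: comm_Sop => [c cC|c d cC dC _].
    apply/commr_sym/comm_refl_cangular.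
    by rewrite !refl_sign_notin ?mulr1 // in_set1 eq_sym ?Cj ?Ck.
  by apply: comm_cangular; rewrite eq_sym ?Cj ?Ck.
- exact/linop_commrZ/commr_sym/linop_commrZ/comm_refl.
- apply: anticommrZ; apply: anticomm_refl_cangular.
  by rewrite refl_sign_in ?inE // refl_sign_notin ?mulr1 // in_set1 eq_sym.
- apply: anticommrZ; rewrite (@refl_cangular_sum _ _ _ (-1)) ?scaleN1r // => c cC.
  by rewrite (refl_sign_in (set11 j)) refl_sign_notin ?mul1r // in_set1 Cj.
- apply/commr_sym/linop_commrZ; rewrite /GRing.comm (@refl_cangular_sum _ _ _ 1) ?scale1r //.
  by move=> c cC; rewrite !refl_sign_notin ?mulr1 // in_set1 ?(Ck c cC).
have KW : cangular_sum k C * (1 + (2 * mu j) *: refl [set j]) =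
    cangular_sum k C + 2 *: (cangular_sum k C * (mu j *: refl [set j])).
  by rewrite mulrDr mulr1 !linop_scalerAr scalerA.
by rewrite -KW -(cangular_sum_anticomm jk jC kC) addrAC subrr add0r.
Qed.

Lemma Gamma_anticomm j k C : j != k -> j \notin C -> k \notin C ->
  Gamma (j |: C) * Gamma [set j; k] + Gamma [set j; k] * Gamma (j |: C)
  = Gamma (k |: C) + (2 * mu j) *: Gamma (k |: (j |: C)) + (2 * mu k) *: Gamma C.
Proof.
move=> jk jC kC; have j_k : j \notin [set k] by rewrite in_set1.
have rAB : refl (j |: C) * refl [set j; k] = refl C * refl [set k].
  by rewrite !reflU1 // -mulrA [refl [set j] * _]mulrA (comm_refl [set j]) -mulrA reflK mulr1.
have rBA : refl [set j; k] * refl (j |: C) = refl C * refl [set k].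
  by rewrite (comm_refl [set j; k]) rAB.
have GkC : Gamma (k |: C) = Sop (k |: C) * (refl C * refl [set k]) by rewrite /Gamma reflU1.
have GD : (2 * mu j) *: Gamma (k |: (j |: C)) =
    2 *: (Sop (k |: (j |: C)) * (mu j *: refl [set j])) * (refl C * refl [set k]).
  rewrite /Gamma !reflU1 ?in_setU1 ?negb_or 1?eq_sym ?jk //; move: (Sop _) => S.
  rewrite linop_scalerAr !linop_scalerAl scalerA -!mulrA.
  by congr (_ *: _); congr (_ * _); rewrite !mulrA (comm_refl C).
have GC : (2 * mu k) *: Gamma C =
    2 *: (Sop C * (mu k *: refl [set k])) * (refl C * refl [set k]).
  rewrite /Gamma; move: (Sop C) => S.
  rewrite linop_scalerAr !linop_scalerAl scalerA -!mulrA.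
  by congr (_ *: _); congr (_ * _); rewrite mulrA (comm_refl [set k]) -mulrA reflK mulr1.
rewrite (GammaM (refl_conj_Sop2 jk kC)) (GammaM (refl2_conj_Sop jC kC)) rAB rBA.
by rewrite GkC GD GC -!mulrDl Sop_anticomm.
Qed.

Lemma Gamma0 : Gamma set0 = - half.
Proof. by rewrite /Gamma Sop0 refl0 mulr1. Qed.

Lemma Gamma1 j : Gamma [set j] = mu j *: (1 : L).
Proof. by rewrite /Gamma Sop1 linop_scalerAl reflK. Qed.

Hypothesis mu_neq0 : forall i, mu i != 0.

Local Notation pair_Gammas :=
  (fun Q : Op n V => exists B : {set 'I_n}, #|B| = 2 /\ Q = GammaA e mu B).

Lemma Gamma_in_alg A : op_alg pair_Gammas (Gamma A).
Proof.
move cardA: #|A| => m; elim/ltn_ind: m A cardA => m IHm A cardA.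
have IH (B : {set 'I_n}) : (#|B| < m)%N -> op_alg pair_Gammas (Gamma B).
  by move=> ltBm; exact: (IHm _ ltBm B erefl).
case: m IHm IH cardA => [|[|[|m]]] _ IH cardA.
- move/eqP: cardA; rewrite cards_eq0 => /eqP ->; rewrite Gamma0.
  exact/alg_scale/alg_scale/alg_id.
- have [j ->] := cards1P (introT eqP cardA); rewrite Gamma1; exact/alg_scale/alg_id.
- by apply: alg_gen; exists A; rewrite GammaAE.
have [j [k [C [jk jC kC cardC ->]]]] := cards_split2 cardA.
have mu2j : 2 * mu j != 0 by rewrite mulf_neq0 ?pnatr_eq0.
have -> : Gamma (k |: (j |: C)) = (2 * mu j)^-1 *:
    (Gamma (j |: C) * Gamma [set j; k] + Gamma [set j; k] * Gamma (j |: C)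
     - Gamma (k |: C) - (2 * mu k) *: Gamma C).
  by rewrite Gamma_anticomm // addrAC addrK addrAC subrr add0r scalerA mulVf // scale1r.
have cardjC : #|j |: C| = m.+2 by rewrite cardsU1 jC cardC.
have cardjk : #|[set j; k]| = 2 by rewrite cardsU1 in_set1 jk cards1.
have cardkC : #|k |: C| = m.+2 by rewrite cardsU1 kC cardC.
apply/alg_scale/alg_add; first apply/alg_add; first apply/alg_add.
- by apply/alg_comp; apply: IH; rewrite ?cardjC ?cardjk.
- by apply/alg_comp; apply: IH; rewrite ?cardjC ?cardjk.
- by apply/alg_scale; apply: IH; rewrite cardkC.
- by apply/alg_scale/alg_scale; apply: IH; rewrite cardC.
Qed.

End DunklDirac.

Theorem lemma6 (R : realFieldType) (n : nat) (V : lmodType R)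
    (e : 'I_n -> V -> V) (mu : 'I_n -> R) :
  (3 <= n)%N ->
  (forall i, 0 < mu i) ->
  (forall i (c : R) (u v : V), e i (c *: u + v) = c *: e i u + e i v) ->
  (forall i j (v : V), e i (e j v) + e j (e i v) = - (2 * (i == j)%:R) *: v) ->
  forall A : {set 'I_n},
    exists P : Op n V,
      op_alg (fun Q => exists B : {set 'I_n}, #|B| = 2%N /\ Q = GammaA e mu B) P /\
      forall f : PV n V, is_poly f -> GammaA e mu A f = P f.
Proof.
(* Take P := Gamma_A: it lies in the algebra for every n, and equals Gamma_A on all of
   [PV n V], not just on polynomials. *)
move=> _ mu_gt0 e_linear e_clifford A; exists (GammaA e mu A); split => //.
rewrite GammaAE; apply: Gamma_in_alg => // i; exact: lt0r_neq0.
Qed.
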